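(* Let $(X,<)$ be a linearly ordered set and define relations on $\beta X$ by $u\trianglelefteq v\iff (u\,\tilde\le\,v\ \vee\ v\,\tilde\ge\,u)$ and $u\equiv v\iff(u\trianglelefteq v\wedge v\trianglelefteq u)$. Then for all $u,v\in\beta X$, $$u\trianglelefteq v\iff\mathrm{supp}(u)\le\mathrm{supp}(v),\qquad u\equiv v\iff\mathrm{supp}(u)=\mathrm{supp}(v).$$ Hence $\trianglelefteq$ is a linear pre-order on $\beta X$, $\equiv$ is an equivalence relation, and the quotient $\beta X/\!\equiv$ with the induced linear order is isomorphic (via $[u]\mapsto\mathrm{supp}(u)$) to the set $s(X)$ of supports of ultrafilters over $X$ with its natural order.
   Context: $\beta X$ is the set of ultrafilters over $X$; $\tilde x=\{S\subseteq X:x\in S\}$. For a binary relation $R$ on $X$, $u\,\tilde R\,v\iff\{x\in X:\{y\in X:x\,R\,y\}\in v\}\in u$. $I_u=\bigcap\{I\in u: I\text{ initial segment of }X\}$, $J_u=\bigcap\{J\in u: J\text{ final segment of }X\}$; for non-principal $u$ exactly one of $I_u\in u$, $J_u\in u$ holds. Supports: $\mathrm{supp}(\tilde x)=\{x\}$; for non-principal $u$, $\mathrm{supp}(u)$ is $I_u$ regarded as a left half-cut if $I_u\in u$, and $J_u$ regarded as a right half-cut if $J_u\in u$; supports are equal iff of the same kind and equal as sets. $s(X)$ is the set of all such supports (all points $\{x\}$, all nonempty initial segments without greatest element as left half-cuts, all nonempty final segments without least element as right half-cuts). Natural linear order on $s(X)$: $\{x\}<\{y\}$ iff $x<y$; $\{x\}<I$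 iff $x\in I$, $I<\{x\}$ iff $x\notin I$; $\{x\}<J$ iff $x\notin J$, $J<\{x\}$ iff $x\in J$; $I<I'$ iff $I\subsetneq I'$; $J<J'$ iff $J\supsetneq J'$; $I<J$ iff $I\cap J=\emptyset$, $J<I$ iff $I\cap J\ne\emptyset$; $\le$ is its reflexive version. *)

From HB Require Import structures.
From mathcomp Require Import all_boot all_order.
Set Implicit Arguments. Unset Strict Implicit. Unset Printing Implicit Defensive.
Import Order.TTheory.
Local Open Scope order_scope.
Local Unset Asymmetric Patterns.

Section UF.
Context {d : Order.disp_t} {X : orderType d}.

Definition subsetX (A B : X -> Prop) : Prop := forall x, A x -> B x.
Definition seteq (A B : X -> Prop) : Prop := forall x, A x <-> B x.

Definition is_ultrafilter (u : (X -> Prop) -> Prop) : Prop :=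
  u (fun _ => True) /\
  ~ u (fun _ => False) /\
  (forall A B, u A -> subsetX A B -> u B) /\
  (forall A B, u A -> u B -> u (fun x => A x /\ B x)) /\
  (forall A, u A \/ u (fun x => ~ A x)).

Definition principal (x : X) : (X -> Prop) -> Prop := fun S => S x.

Definition lift_rel (R : X -> X -> Prop) (u v : (X -> Prop) -> Prop) : Prop :=
  u (fun x => v (fun y => R x y)).

Definition le_rel : X -> X -> Prop := fun x y => x <= y.
Definition ge_rel : X -> X -> Prop := fun x y => y <= x.

Definition trle (u v : (X -> Prop) -> Prop) : Prop :=
  lift_rel le_rel u v \/ lift_rel ge_rel v u.
Definition treq (u v : (X -> Prop) -> Prop) : Prop := trle u v /\ trle v u.

Definition initial_seg (K : X -> Prop) : Prop := forall x y, y <= x -> K x -> K y.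
Definition final_seg (J : X -> Prop) : Prop := forall x y, x <= y -> J x -> J y.

Definition Iu (u : (X -> Prop) -> Prop) : X -> Prop :=
  fun x => forall K, initial_seg K -> u K -> K x.
Definition Ju (u : (X -> Prop) -> Prop) : X -> Prop :=
  fun x => forall J, final_seg J -> u J -> J x.

Definition is_principal (u : (X -> Prop) -> Prop) : Prop :=
  exists x, forall S, u S <-> principal x S.

(* supports: a point, a left half-cut (initial segment), a right half-cut (final segment) *)
Inductive usupport : Type :=
  | SPt : X -> usupport
  | SLeft : (X -> Prop) -> usupport
  | SRight : (X -> Prop) -> usupport.

Definition supp_eq (s t : usupport) : Prop :=
  match s, t with
  | SPt x, SPt y => x = y
  | SLeft K, SLeft K' => seteq K K'
  | SRight J, SRight J' => seteq J J'
  | _, _ => False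
  end.

Definition is_supp (u : (X -> Prop) -> Prop) (s : usupport) : Prop :=
  match s with
  | SPt x => forall S, u S <-> principal x S
  | SLeft K => ~ is_principal u /\ u (Iu u) /\ seteq K (Iu u)
  | SRight J => ~ is_principal u /\ u (Ju u) /\ seteq J (Ju u)
  end.

Definition in_sX (s : usupport) : Prop :=
  match s with
  | SPt _ => True
  | SLeft K => initial_seg K /\ (exists x, K x) /\ (forall x, K x -> exists y, K y /\ x < y)
  | SRight J => final_seg J /\ (exists x, J x) /\ (forall x, J x -> exists y, J y /\ y < x)
  end.

Definition psubset (A B : X -> Prop) : Prop := subsetX A B /\ ~ subsetX B A.

Definition supp_lt (s t : usupport) : Prop :=
  match s, t with
  | SPt x, SPt y => x < y
  | SPt x, SLeft K => K x
  | SLeft K, SPt x => ~ K x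
  | SPt x, SRight J => ~ J x
  | SRight J, SPt x => J x
  | SLeft K, SLeft K' => psubset K K'
  | SRight J, SRight J' => psubset J' J
  | SLeft K, SRight J => forall x, ~ (K x /\ J x)
  | SRight J, SLeft K => exists x, K x /\ J x
  end.

Definition supp_le (s t : usupport) : Prop := supp_lt s t \/ supp_eq s t.

End UF.

(* Every ultrafilter u over X is summarised by a code (below u, side u):
   - below u = {x | (x, +oo) \in u} is the initial segment of points lying
     strictly below u;
   - side u records how u sits at that cut: 0 if u contains below u (u lives
     on a left half-cut), 1 if it contains instead the set of points weakly
     below u (u is principal at the least point above the cut), 2 otherwise
     (u lives on a right half-cut).
   Codes are preordered lexicographically: inclusion of cuts, then sides.

   Corollary 2 follows by transporting everything along codes. *)
From mathcomp Require Import all_boot all_order.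
From mathcomp Require filter.
From Stdlib Require Import Classical ClassicalEpsilon.
Set Implicit Arguments. Unset Strict Implicit.
Import Order.TTheory.
Local Open Scope order_scope.

Section Supports.
Context {d : Order.disp_t} {X : orderType d}.
Implicit Types (u v w : (X -> Prop) -> Prop) (x y : X).

Lemma nlt_le x y : ~ (x < y) -> y <= x.
Proof. by move=> h; rewrite leNgt; apply/negP. Qed.

Lemma nle_lt x y : ~ (x <= y) -> y < x.
Proof. by move=> h; rewrite ltNge; apply/negP. Qed.

Lemma ultrafilter_extends (F : (X -> Prop) -> Prop) :
  F (fun _ => True) -> ~ F (fun _ => False) ->
  (forall A B, F A -> subsetX A B -> F B) ->
  (forall A B, F A -> F B -> F (fun x => A x /\ B x)) ->
  exists u, is_ultrafilter u /\ (forall A, F A -> u A).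
Proof.
move=> FT FF Fmono Fmeet.
have PF : filter.ProperFilter F.
  constructor; first exact: FF.
  constructor; first exact: FT.
    by move=> A B; apply: Fmeet.
  by move=> A B AB FA; apply: Fmono FA AB.
have [G [UG FG]] := filter.ultraFilterLemma PF.
exists G; split; last by move=> A; apply: FG.
split; first exact: (@filter.filterT _ G _).
split; first exact: (@filter.filter_not_empty _ G _).
split; first by move=> A B GA AB; apply: (@filter.filterS _ G _ A B AB GA).
split; first by move=> A B GA GB; apply: (@filter.filterI _ G _ A B GA GB).
by move=> A; apply: (filter.in_ultra_setVsetC A UG).
Qed.

Section UltrafilterFacts.
Variable u : (X -> Prop) -> Prop.
Hypothesis Hu : is_ultrafilter u.

Lemma uf_empty : ~ u (fun _ => False).
Proof. by case: Hu => _ []. Qed.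

Lemma uf_mono A B : u A -> subsetX A B -> u B.
Proof. by case: Hu => _ [_ [h _]]; apply: h. Qed.

Lemma uf_seteq A B : u A -> seteq A B -> u B.
Proof. by move=> h e; apply: (uf_mono h) => x /e. Qed.

Lemma uf_meet A B : u A -> u B -> u (fun x => A x /\ B x).
Proof. by case: Hu => _ [_ [_ [h _]]]; apply: h. Qed.

Lemma uf_compl A : u A \/ u (fun x => ~ A x).
Proof. by case: Hu => _ [_ [_ [_ h]]]; apply: h. Qed.

Lemma uf_not A : ~ u A -> u (fun x => ~ A x).
Proof. by move=> h; case: (uf_compl A). Qed.

Lemma uf_disjoint A B : u A -> u B -> (forall x, A x -> B x -> False) -> False.
Proof.
move=> uA uB AB; apply: uf_empty.
by apply: (uf_mono (uf_meet uA uB)) => x [/AB].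
Qed.

Lemma uf_point x : u (fun y => y = x) -> is_principal u.
Proof.
move=> ux; exists x => S; split => [uS|Sx]; last by apply: (uf_mono ux) => y ->.
by apply: NNPP => nSx; apply: (uf_disjoint uS ux) => y Sy yx; apply: nSx; rewrite -yx.
Qed.

End UltrafilterFacts.

Definition below u : X -> Prop := fun x => u (fun y => x < y).
Definition weakly_below u : X -> Prop := fun x => u (fun y => x <= y).

(* The side of u relative to its cut: 0 = left, 1 = point, 2 = right. *)
Definition side u : nat :=
  if excluded_middle_informative (u (below u)) then 0%N
  else if excluded_middle_informative (u (weakly_below u)) then 1%N else 2%N.

Definition code_le (C : X -> Prop) (k : nat) (C' : X -> Prop) (k' : nat) : Prop :=
  (subsetX C C' /\ ~ subsetX C' C) \/ (subsetX C C' /\ subsetX C' C /\ (k <= k')%N).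

Lemma below_initial u : is_ultrafilter u -> initial_seg (below u).
Proof. by move=> Hu x y yx ux; apply: (uf_mono Hu ux) => z; apply: le_lt_trans. Qed.

Lemma side0 u : side u = 0%N <-> u (below u).
Proof. by rewrite /side; do 2 case: excluded_middle_informative. Qed.

Lemma side1 u : side u = 1%N <-> ~ u (below u) /\ u (weakly_below u).
Proof.
rewrite /side; case: (excluded_middle_informative (u (below u))) => h1;
  case: (excluded_middle_informative (u (weakly_below u))) => h2 /=; split => //; tauto.
Qed.

Lemma side2 u : side u = 2%N <-> ~ u (below u) /\ ~ u (weakly_below u).
Proof.
rewrite /side; case: (excluded_middle_informative (u (below u))) => h1;
  case: (excluded_middle_informative (u (weakly_below u))) => h2 /=; split => //; tauto.
Qed.

Lemma side_le2 u : (side u <= 2)%N.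
Proof. by rewrite /side; do 2 case: excluded_middle_informative. Qed.

Lemma below_weakly u : is_ultrafilter u -> subsetX (below u) (weakly_below u).
Proof. by move=> Hu x h; apply: (uf_mono Hu h) => z; apply: ltW. Qed.

Lemma weakly_below_left u : is_ultrafilter u -> u (below u) ->
  subsetX (weakly_below u) (below u).
Proof.
move=> Hu ub x ux; apply: NNPP => nx.
by apply: (uf_disjoint Hu ub ux) => y /(below_initial Hu) yb /yb.
Qed.

Section TwoUltrafilters.
Variables u v : (X -> Prop) -> Prop.
Hypotheses (Hu : is_ultrafilter u) (Hv : is_ultrafilter v).

Lemma trle_below : trle u v <-> u (weakly_below v) \/ ~ v (below u).
Proof.
rewrite /trle /lift_rel /le_rel /ge_rel; split; case=> h; [by left| |by left|].
  right => vb; apply: (uf_disjoint Hv vb h) => x ux vx.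
  apply: (uf_disjoint Hu ux vx) => y xy yx.
  by move: (lt_le_trans xy yx); rewrite ltxx.
right; apply: (uf_mono Hv (uf_not Hv h)) => x nx.
by apply: (uf_mono Hu (uf_not Hu nx)) => y; apply: nlt_le.
Qed.

Lemma trle_of_gap : (exists x, below v x /\ ~ below u x) -> trle u v.
Proof.
case=> x [vx ux]; apply/trle_below; right => vb.
by apply: (uf_disjoint Hv vb vx) => y yu xy; apply: ux; exact: (below_initial Hu (ltW xy) yu).
Qed.

Lemma not_trle_of_gap : (exists x, below u x /\ ~ below v x) -> ~ trle u v.
Proof.
case=> x [ux vx] /trle_below [h|h].
  apply: (uf_disjoint Hu h ux) => y vy xy.
  have vx' : v (fun z => z <= x) by apply: (uf_mono Hv (uf_not Hv vx)) => z; apply: nlt_le.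
  apply: (uf_disjoint Hv vy vx') => z yz zx.
  by move: (lt_le_trans xy (le_trans yz zx)); rewrite ltxx.
apply: h; apply: (uf_mono Hv (uf_not Hv vx)) => z /nlt_le zx.
exact: (below_initial Hu zx ux).
Qed.

(* Two ultrafilters with the same cut cannot be right-sided and principal
   respectively: the principal one pins down the least point above the cut. *)
Lemma not_right_point : seteq (below u) (below v) -> side u = 2%N -> side v = 1%N -> False.
Proof.
move=> e /side2 [nub nuw] /side1 [nvb vw].
have [q [vq nq]] : exists q, weakly_below v q /\ ~ below v q.
  apply: NNPP => hn; apply: nvb; apply: (uf_seteq Hv vw) => x.
  split; last exact: below_weakly.
  by move=> hx; apply: NNPP => nx; apply: hn; exists x.
have uq : u (fun y => y <= q).
  by apply: (uf_mono Hu (uf_not Hu (fun h => nq (proj1 (e q) h)))) => y; apply: nlt_le.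
have uq' := uf_meet Hu uq (uf_not Hu nub).
have at_q : forall y, y <= q /\ ~ below u y -> y = q.
  move=> y [yq ny]; apply/eqP; rewrite eq_le yq /=; apply: NNPP => /nle_lt yq'.
  have vy : v (fun z => z <= y).
    by apply: (uf_mono Hv (uf_not Hv (fun h => ny (proj2 (e y) h)))) => z; apply: nlt_le.
  apply: (uf_disjoint Hv vy vq) => z zy qz.
  by move: (lt_le_trans yq' (le_trans qz zy)); rewrite ltxx.
apply: nuw; apply: (uf_mono Hu uq') => y /at_q ->.
by apply: (uf_mono Hu uq') => z /at_q ->.
Qed.

Lemma trle_same_cut : seteq (below u) (below v) -> (trle u v <-> (side u <= side v)%N).
Proof.
move=> e; rewrite trle_below.
case: (excluded_middle_informative (v (below v))) => vb.
  have -> : side v = 0%N by apply/side0.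
  rewrite leqn0; have vbu : v (below u) by apply: (uf_seteq Hv vb) => x; split => /e.
  have e2 : seteq (weakly_below v) (below u).
    by move=> x; split => [/(weakly_below_left Hv vb) /e //| /e]; apply: below_weakly.
  split; first by case=> // h; apply/eqP/side0; exact: (uf_seteq Hu h e2).
  by move/eqP/side0 => h; left; apply: (uf_seteq Hu h) => x; split => /e2.
have nvbu : ~ v (below u) by move=> h; apply: vb; exact: (uf_seteq Hv h e).
split => _; last by right.
have sv0 : side v <> 0%N by move/side0.
have := side_le2 u; have := side_le2 v.
case svE: (side v) => [|[|[|]]] //; case suE: (side u) => [|[|[|]]] // _ _.
by exfalso; apply: not_right_point.
Qed.

Lemma below_cases :
  (exists x, below v x /\ ~ below u x) \/ (exists x, below u x /\ ~ below v x) \/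
  seteq (below u) (below v).
Proof.
case: (classic (exists x, below v x /\ ~ below u x)) => [|nA]; first by left.
case: (classic (exists x, below u x /\ ~ below v x)) => [|nB]; first by right; left.
by right; right => x; split => h; apply: NNPP => nh; [apply: nB|apply: nA]; exists x.
Qed.

Lemma trle_code : trle u v <-> code_le (below u) (side u) (below v) (side v).
Proof.
case: below_cases => [gap|[gap|e]].
- split => _; last exact: trle_of_gap.
  case: gap => x [vx ux]; left; split; last by move=> h; apply: ux; apply: h.
  move=> y uy; apply: NNPP => vy; case: (leP x y) => [xy|yx].
    by apply: ux; exact: (below_initial Hu xy uy).
  by apply: vy; exact: (below_initial Hv (ltW yx) vx).
- split => [/(not_trle_of_gap gap) //|h]; exfalso.
  by case: gap => x [ux vx]; apply: vx; case: h => [[h _]|[h _]]; apply: h.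
- rewrite (trle_same_cut e); split => [h|]; first by right; split; [|split] => // x /e.
  by case=> [[_ []]|[_ [_ h]]] // x /e.
Qed.

End TwoUltrafilters.

Lemma trle_total u v : is_ultrafilter u -> is_ultrafilter v -> trle u v \/ trle v u.
Proof.
move=> Hu Hv; case: (below_cases u v) => [gap|[gap|e]].
- by left; apply: trle_of_gap.
- by right; apply: trle_of_gap.
case: (leqP (side u) (side v)) => h; first by left; apply/(trle_same_cut Hu Hv e).
right; apply/(trle_same_cut Hv Hu) => [x|]; [by split => /e|exact: ltnW].
Qed.

Lemma code_le_refl C k : code_le C k C k.
Proof. by right; split; [|split]. Qed.

Lemma code_le_trans C1 k1 C2 k2 C3 k3 :
  code_le C1 k1 C2 k2 -> code_le C2 k2 C3 k3 -> code_le C1 k1 C3 k3.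
Proof.
have tr (A B C : X -> Prop) : subsetX A B -> subsetX B C -> subsetX A C by move=> h1 h2 x /h1 /h2.
case=> [[s12 n21]|[s12 [s21 k12]]] [[s23 n32]|[s23 [s32 k23]]].
- by left; split; [apply: tr s12 s23|move=> s31; apply: n21; apply: tr s23 s31].
- by left; split; [apply: tr s12 s23|move=> s31; apply: n21; apply: tr s23 s31].
- by left; split; [apply: tr s12 s23|move=> s31; apply: n32; apply: tr s31 s12].
- by right; split; [apply: tr s12 s23|split; [apply: tr s32 s21|apply: leq_trans k12 k23]].
Qed.

Lemma code_le_seteq C C1 k C' C1' k' : seteq C C1 -> seteq C' C1' ->
  code_le C k C' k' <-> code_le C1 k C1' k'.
Proof.
have sub (A B A' B' : X -> Prop) : seteq A A' -> seteq B B' -> subsetX A B -> subsetX A' B'.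
  by move=> ea eb h x /ea /h /eb.
have sym (A B : X -> Prop) : seteq A B -> seteq B A by move=> h x; split => /h.
move=> e e'; split; case=> [[h1 h2]|[h1 [h2 h3]]].
- left; split; first exact: sub e e' h1.
  by move=> h; apply: h2; exact: sub (sym _ _ e') (sym _ _ e) h.
- right; split; first exact: sub e e' h1.
  by split => //; exact: sub e' e h2.
- left; split; first exact: sub (sym _ _ e) (sym _ _ e') h1.
  by move=> h; apply: h2; exact: sub e' e h.
- right; split; first exact: sub (sym _ _ e) (sym _ _ e') h1.
  by split => //; exact: sub (sym _ _ e') (sym _ _ e) h2.
Qed.

Lemma code_le_anti C k C' k' :
  code_le C k C' k' /\ code_le C' k' C k <-> seteq C C' /\ k = k'.
Proof.
split.
  case=> [[[h1 h2]|[h1 [h2 h3]]] [[h4 h5]|[h4 [h5 h6]]]]; try tauto.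
  split; first by move=> x; split; [apply: h1|apply: h2].
  by apply/eqP; rewrite eqn_leq h3 h6.
by case=> e <-; split; right; split; [|split| |split] => // x /e.
Qed.

Lemma code_le_side_lt C k C' k' : (k < k')%N -> code_le C k C' k' <-> subsetX C C'.
Proof.
move=> kk; split; first by case=> [[]|[]].
move=> h; case: (classic (subsetX C' C)) => h'; [right|left] => //.
by split => //; split => //; apply: ltnW.
Qed.

Lemma code_le_side_eq C k C' : code_le C k C' k <-> subsetX C C'.
Proof.
split; first by case=> [[]|[]].
by move=> h; case: (classic (subsetX C' C)) => h'; [right|left].
Qed.

Lemma code_le_side_gt C k C' k' : (k' < k)%N ->
  code_le C k C' k' <-> subsetX C C' /\ ~ subsetX C' C.
Proof.
move=> kk; split; last by left.
by case=> [//|[_ [_ h]]]; move: (leq_trans kk h); rewrite ltnn.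
Qed.

(* The code of a support: its cut is the set of points strictly below it. *)
Definition supp_cut (s : @usupport d X) : X -> Prop :=
  match s with SPt p => fun x => x < p | SLeft K => K | SRight J => fun x => ~ J x end.
Definition supp_side (s : @usupport d X) : nat :=
  match s with SPt _ => 1%N | SLeft _ => 0%N | SRight _ => 2%N end.

Local Notation supp_code_le s t :=
  (code_le (supp_cut s) (supp_side s) (supp_cut t) (supp_side t)).

Lemma supp_le_code_pt p (t : @usupport d X) : in_sX t ->
  supp_le (SPt p) t <-> supp_code_le (SPt p) t.
Proof.
rewrite /supp_le; case: t => [q|K|J] /=.
- move=> _; rewrite code_le_side_eq; split.
    by case=> [pq x xp|->] //; apply: lt_trans xp pq.
  move=> h; case: (ltgtP p q) => [pq|qp|->]; [by left|exfalso|by right].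
  by move: (h q qp); rewrite ltxx.
- move=> [Ki [_ Km]]; rewrite code_le_side_gt //; split.
    case=> // Kp; split; first by move=> x xp; apply: Ki (ltW xp) Kp.
    by move=> h; move: (h p Kp); rewrite ltxx.
  case=> _ h2; left; apply: NNPP => nKp; apply: h2 => x Kx.
  by apply: nle_lt => px; apply: nKp; apply: Ki px Kx.
- move=> [Jf [_ Jm]]; rewrite code_le_side_lt //; split.
    by case=> // nJ x xp Jx; apply: nJ; apply: Jf (ltW xp) Jx.
  by move=> h; left => Jp; case: (Jm p Jp) => y [Jy yp]; apply: h y yp Jy.
Qed.

Lemma supp_le_code_left K (t : @usupport d X) : in_sX (SLeft K) -> in_sX t ->
  supp_le (SLeft K) t <-> supp_code_le (SLeft K) t.
Proof.
rewrite /supp_le; case: t => [q|K'|J] /= [Ki _] _.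
- rewrite code_le_side_lt //; split.
    by case=> // nK x Kx; apply: nle_lt => qx; apply: nK; apply: Ki qx Kx.
  by move=> h; left => Kq; move: (h q Kq); rewrite ltxx.
- rewrite code_le_side_eq; split; first by case=> [[]|e] // x /e.
  move=> h; case: (classic (subsetX K' K)) => h'; [right|left] => //.
  by move=> x; split; [apply: h|apply: h'].
- rewrite code_le_side_lt //; split; first by case=> // h x Kx Jx; apply: (h x).
  by move=> h; left => x [Kx Jx]; apply: h x Kx Jx.
Qed.

Lemma supp_le_code_right J (t : @usupport d X) : in_sX (SRight J) -> in_sX t ->
  supp_le (SRight J) t <-> supp_code_le (SRight J) t.
Proof.
rewrite /supp_le; case: t => [q|K|J'] /= [Jf [_ Jm]].
- move=> _; rewrite code_le_side_gt //; split.
    case=> // Jq; split.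
      by move=> x nJ; apply: nle_lt => qx; apply: nJ; apply: Jf qx Jq.
    by move=> h; case: (Jm q Jq) => y [Jy yq]; apply: h y yq Jy.
  case=> _ h2; left; apply: NNPP => nJq; apply: h2 => x xq Jx.
  by apply: nJq; apply: Jf (ltW xq) Jx.
- move=> [Ki _]; rewrite code_le_side_gt //; split.
    case=> // -[x [Kx Jx]]; split; last by move=> h; apply: h x Kx Jx.
    move=> y nJy; apply: NNPP => nKy; case: (leP x y) => [xy|yx].
      by apply: nJy; apply: Jf xy Jx.
    by apply: nKy; apply: Ki (ltW yx) Kx.
  case=> _ h2; left; apply: NNPP => n; apply: h2 => x Kx Jx; apply: n; by exists x.
- move=> _; rewrite code_le_side_eq; split.
    by case=> [[h _]|e] x nJ J'x; apply: nJ; [apply: h|apply: (proj2 (e x))].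
  move=> h; have sub : subsetX J' J by move=> x J'x; apply: NNPP => nJ; apply: h x nJ J'x.
  case: (classic (subsetX J J')) => h'; last by left.
  by right => x; split; [apply: h'|apply: sub].
Qed.

Lemma supp_le_code (s t : @usupport d X) : in_sX s -> in_sX t ->
  supp_le s t <-> supp_code_le s t.
Proof.
case: s => [p|K|J] hs ht.
- exact: supp_le_code_pt.
- exact: supp_le_code_left.
- exact: supp_le_code_right.
Qed.

Lemma supp_eq_code (s t : @usupport d X) :
  supp_eq s t <-> seteq (supp_cut s) (supp_cut t) /\ supp_side s = supp_side t.
Proof.
case: s => [p|K|J]; case: t => [q|K'|J'] /=; split; try (by move=> ->); try by case.
- case=> e _; case: (ltgtP p q) => // [pq|qp]; exfalso.
    by move: (proj2 (e p) pq); rewrite ltxx.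
  by move: (proj1 (e q) qp); rewrite ltxx.
- by move=> e.
- by move=> e; split => // x; split => nJ h; apply: nJ; apply/e.
- by case=> e _ x; split => h; apply: NNPP => nh; [apply: (proj2 (e x) nh h)|apply: (proj1 (e x) nh h)].
Qed.

Section SupportOfAnUltrafilter.
Variable u : (X -> Prop) -> Prop.
Hypothesis Hu : is_ultrafilter u.

Lemma Iu_initial : initial_seg (Iu u).
Proof. by move=> x y yx h K hK uK; apply: hK yx (h K hK uK). Qed.

Lemma Ju_final : final_seg (Ju u).
Proof. by move=> x y xy h J hJ uJ; apply: hJ xy (h J hJ uJ). Qed.

Lemma Iu_ge x : Iu u x -> u (fun y => x <= y).
Proof.
move=> h; apply: NNPP => n.
have hK : initial_seg (fun y => ~ x <= y) by move=> a b ba na xb; apply: na; apply: le_trans xb ba.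
exact: h _ hK (uf_not Hu n) (lexx x).
Qed.

Lemma Ju_le x : Ju u x -> u (fun y => y <= x).
Proof.
move=> h; apply: NNPP => n.
have hF : final_seg (fun y => ~ y <= x) by move=> a b ab na bx; apply: na; apply: le_trans ab bx.
exact: h _ hF (uf_not Hu n) (lexx x).
Qed.

Lemma below_Iu x : below u x -> Iu u x.
Proof.
move=> h K hK uK; apply: NNPP => nK.
by apply: (uf_disjoint Hu uK h) => y Ky xy; apply: nK; apply: hK (ltW xy) Ky.
Qed.

Lemma not_below_Ju x : ~ below u x -> Ju u x.
Proof.
move=> h J hJ uJ; apply: NNPP => nJ.
have ux : u (fun y => y <= x) by apply: (uf_mono Hu (uf_not Hu h)) => y; apply: nlt_le.
by apply: (uf_disjoint Hu uJ ux) => y Jy yx; apply: nJ; apply: hJ yx Jy.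
Qed.

Lemma Ju_not_below x : Ju u x -> ~ below u x.
Proof.
move=> h ux; have hF : final_seg (fun y => x < y) by move=> a b ab xa; apply: lt_le_trans xa ab.
by move: (h _ hF ux); rewrite ltxx.
Qed.

Lemma Iu_or_Ju : ~ is_principal u -> u (Iu u) \/ u (Ju u).
Proof.
move=> np; case: (uf_compl Hu (Iu u)) => h; [by left|right].
apply: (uf_mono Hu h) => z nz J hJ uJ; apply: NNPP => nJ; apply: nz => K hK uK.
apply: NNPP => nK; apply: (uf_disjoint Hu uK uJ) => y Ky Jy.
case: (leP z y) => [zy|yz]; first by apply: nK; apply: hK zy Ky.
by apply: nJ; apply: hJ (ltW yz) Jy.
Qed.

Lemma uf_nonempty A : u A -> exists x, A x.
Proof. by move=> uA; apply: NNPP => n; apply: (uf_empty Hu); apply: (uf_mono Hu uA) => x Ax; apply: n; exists x. Qed.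

Lemma Iu_below : ~ is_principal u -> forall x, Iu u x -> below u x.
Proof.
move=> np x hx; apply: NNPP => n; apply: np; apply: (uf_point Hu (x := x)).
have ux : u (fun y => y <= x) by apply: (uf_mono Hu (uf_not Hu n)) => y; apply: nlt_le.
by apply: (uf_mono Hu (uf_meet Hu ux (Iu_ge hx))) => y [a b]; apply/eqP; rewrite eq_le a b.
Qed.

Lemma Ju_not_weakly_below : ~ is_principal u -> forall x, Ju u x -> ~ weakly_below u x.
Proof.
move=> np x hx ux; apply: np; apply: (uf_point Hu (x := x)).
by apply: (uf_mono Hu (uf_meet Hu ux (Ju_le hx))) => y [a b]; apply/eqP; rewrite eq_le a b.
Qed.

Lemma Iu_nomax : ~ is_principal u -> u (Iu u) ->
  forall x, Iu u x -> exists y, Iu u y /\ x < y.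
Proof.
move=> np uI x hx; apply: NNPP => n; apply: np; apply: (uf_point Hu (x := x)).
apply: (uf_mono Hu (uf_meet Hu (Iu_ge hx) uI)) => y [xy Iy]; apply/eqP; rewrite eq_le xy andbT.
by apply: nlt_le => xy'; apply: n; exists y.
Qed.

Lemma Ju_nomin : ~ is_principal u -> u (Ju u) ->
  forall x, Ju u x -> exists y, Ju u y /\ y < x.
Proof.
move=> np uJ x hx; apply: NNPP => n; apply: np; apply: (uf_point Hu (x := x)).
apply: (uf_mono Hu (uf_meet Hu (Ju_le hx) uJ)) => y [yx Jy]; apply/eqP; rewrite eq_le yx /=.
by apply: nlt_le => xy'; apply: n; exists y.
Qed.

Lemma supp_exists : exists s, is_supp u s.
Proof.
case: (classic (is_principal u)) => [[x hx]|np]; first by exists (SPt x).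
by case: (Iu_or_Ju np) => h; [exists (SLeft (Iu u))|exists (SRight (Ju u))].
Qed.

Lemma supp_in_sX s : is_supp u s -> in_sX s.
Proof.
case: s => [x|K|J] //= [np [h e]]; (split; [|split]).
- by move=> a b ba /e /(Iu_initial ba) /e.
- by case: (uf_nonempty h) => x /e; exists x.
- by move=> x /e /(Iu_nomax np h) [y [/e]]; exists y.
- by move=> a b ab /e /(Ju_final ab) /e.
- by case: (uf_nonempty h) => x /e; exists x.
- by move=> x /e /(Ju_nomin np h) [y [/e]]; exists y.
Qed.

Lemma code_supp s : is_supp u s -> seteq (below u) (supp_cut s) /\ side u = supp_side s.
Proof.
case: s => [p|K|J] /=.
- move=> hp; split; first by move=> x; rewrite /below hp.
  apply/side1; rewrite /below /weakly_below !hp /principal.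
  by split; [rewrite hp /principal ltxx|rewrite hp /principal lexx].
- case=> np [h e]; have eK : seteq (below u) K.
    by move=> x; split => [/below_Iu /e //|/e /(Iu_below np)].
  split => //; apply/side0; apply: (uf_seteq Hu h) => x.
  by split; [apply: Iu_below|apply: below_Iu].
- case=> np [h e]; split.
    move=> x; split => [ux /e Jx|nJ]; first exact: Ju_not_below Jx ux.
    by apply: NNPP => nx; apply: nJ; apply/e; apply: not_below_Ju.
  apply/side2; split => ux; apply: (uf_disjoint Hu ux h) => x.
    by move=> xb /Ju_not_below.
  by move=> xw /(Ju_not_weakly_below np).
Qed.

End SupportOfAnUltrafilter.

(* A left half-cut K is the support of the ultrafilter generated by the tails
   [x, K) of K. *)
Lemma left_cut_realised K : in_sX (SLeft K) ->
  exists u, is_ultrafilter u /\ is_supp u (SLeft K).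
Proof.
move=> [Ki [[x0 Kx0] Km]].
pose F := fun S : X -> Prop => exists x, K x /\ forall y, K y -> x <= y -> S y.
have [u [Hu Fu]] : exists u, is_ultrafilter u /\ (forall A, F A -> u A).
  apply: ultrafilter_extends.
  - by exists x0.
  - by case=> x [Kx h]; apply: h x Kx (lexx x).
  - by move=> A B [x [Kx h]] AB; exists x; split => // y Ky xy; apply: AB; apply: h.
  - move=> A B [x1 [K1 h1]] [x2 [K2 h2]]; case: (leP x1 x2) => [x12|x21].
      by exists x2; split => // y Ky xy; split; [apply: h1 (le_trans x12 xy)|apply: h2].
    by exists x1; split => // y Ky xy; split; [apply: h1|apply: h2 (le_trans (ltW x21) xy)].
have uK : u K by apply: Fu; exists x0; split => // y Ky _.
have utail x : K x -> u (fun y => x <= y) by move=> Kx; apply: Fu; exists x.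
have e : seteq K (Iu u).
  move=> x; split => [Kx K' hK' uK'|h]; last exact: h K Ki uK.
  apply: NNPP => nK; apply: (uf_disjoint Hu uK' (utail x Kx)) => y Ky xy.
  by apply: nK; apply: hK' xy Ky.
exists u; split => //; split; last by split => //; exact: (uf_seteq Hu uK e).
case=> p hp; have Kp : K p by apply/(hp K).
case: (Km p Kp) => z [Kz pz]; have zp := proj1 (hp _) (utail z Kz).
by move: (lt_le_trans pz zp); rewrite ltxx.
Qed.

(* Symmetrically for a right half-cut J and its tails (J, x]. *)
Lemma right_cut_realised J : in_sX (SRight J) ->
  exists u, is_ultrafilter u /\ is_supp u (SRight J).
Proof.
move=> [Jf [[x0 Jx0] Jm]].
pose F := fun S : X -> Prop => exists x, J x /\ forall y, J y -> y <= x -> S y.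
have [u [Hu Fu]] : exists u, is_ultrafilter u /\ (forall A, F A -> u A).
  apply: ultrafilter_extends.
  - by exists x0.
  - by case=> x [Jx h]; apply: h x Jx (lexx x).
  - by move=> A B [x [Jx h]] AB; exists x; split => // y Jy yx; apply: AB; apply: h.
  - move=> A B [x1 [J1 h1]] [x2 [J2 h2]]; case: (leP x1 x2) => [x12|x21].
      by exists x1; split => // y Jy yx; split; [apply: h1|apply: h2 (le_trans yx x12)].
    by exists x2; split => // y Jy yx; split; [apply: h1 (le_trans yx (ltW x21))|apply: h2].
have uJ : u J by apply: Fu; exists x0; split => // y Jy _.
have utail x : J x -> u (fun y => y <= x) by move=> Jx; apply: Fu; exists x.
have e : seteq J (Ju u).
  move=> x; split => [Jx J' hJ' uJ'|h]; last exact: h J Jf uJ.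
  apply: NNPP => nJ; apply: (uf_disjoint Hu uJ' (utail x Jx)) => y Jy yx.
  by apply: nJ; apply: hJ' yx Jy.
exists u; split => //; split; last by split => //; exact: (uf_seteq Hu uJ e).
case=> p hp; have Jp : J p by apply/(hp J).
case: (Jm p Jp) => z [Jz zp]; have pz := proj1 (hp _) (utail z Jz).
by move: (lt_le_trans zp pz); rewrite ltxx.
Qed.

Lemma supp_surj (s : @usupport d X) : in_sX s -> exists u, is_ultrafilter u /\ is_supp u s.
Proof.
case: s => [p|K|J] hs; [|exact: left_cut_realised|exact: right_cut_realised].
exists (principal p); split => //; do 3 (split => //); first by move=> A B pA h; apply: h.
by split => // A; apply: classic.
Qed.

Lemma trle_supp u v su sv : is_ultrafilter u -> is_ultrafilter v ->
  is_supp u su -> is_supp v sv -> (trle u v <-> supp_le su sv).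
Proof.
move=> Hu Hv hsu hsv.
rewrite (trle_code Hu Hv).
have [eu ->] := code_supp Hu hsu; have [ev ->] := code_supp Hv hsv.
rewrite (code_le_seteq _ _ eu ev).
by rewrite supp_le_code //; [exact: (supp_in_sX Hu hsu)|exact: (supp_in_sX Hv hsv)].
Qed.

Lemma trle_refl u : is_ultrafilter u -> trle u u.
Proof. by move=> Hu; apply/(trle_code Hu Hu); apply: code_le_refl. Qed.

Lemma trle_trans u v w : is_ultrafilter u -> is_ultrafilter v -> is_ultrafilter w ->
  trle u v -> trle v w -> trle u w.
Proof.
move=> Hu Hv Hw /(trle_code Hu Hv) uv /(trle_code Hv Hw) vw.
by apply/(trle_code Hu Hw); apply: code_le_trans uv vw.
Qed.

Lemma treq_supp u v su sv : is_ultrafilter u -> is_ultrafilter v ->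
  is_supp u su -> is_supp v sv -> (treq u v <-> supp_eq su sv).
Proof.
move=> Hu Hv hsu hsv.
have isu := supp_in_sX Hu hsu; have isv := supp_in_sX Hv hsv.
rewrite /treq (trle_supp Hu Hv hsu hsv) (trle_supp Hv Hu hsv hsu).
by rewrite (supp_le_code isu isv) (supp_le_code isv isu) code_le_anti supp_eq_code.
Qed.

End Supports.

Theorem corollary2 (d : Order.disp_t) (X : orderType d) :
  (* every ultrafilter has a usupport, lying in s(X) *)
  (forall u : (X -> Prop) -> Prop, is_ultrafilter u ->
     exists s, is_supp u s /\ in_sX s) /\
  (* main equivalences *)
  (forall (u v : (X -> Prop) -> Prop) (su sv : usupport),
     is_ultrafilter u -> is_ultrafilter v -> is_supp u su -> is_supp v sv ->
     (trle u v <-> supp_le su sv) /\ (treq u v <-> supp_eq su sv)) /\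
  (* trianglelefteq is a linear pre-order on betaX *)
  (forall u : (X -> Prop) -> Prop, is_ultrafilter u -> trle u u) /\
  (forall u v w : (X -> Prop) -> Prop, is_ultrafilter u -> is_ultrafilter v -> is_ultrafilter w ->
     trle u v -> trle v w -> trle u w) /\
  (forall u v : (X -> Prop) -> Prop, is_ultrafilter u -> is_ultrafilter v -> trle u v \/ trle v u) /\
  (* equiv is an equivalence relation on betaX *)
  (forall u : (X -> Prop) -> Prop, is_ultrafilter u -> treq u u) /\
  (forall u v : (X -> Prop) -> Prop, is_ultrafilter u -> is_ultrafilter v -> treq u v -> treq v u) /\
  (forall u v w : (X -> Prop) -> Prop, is_ultrafilter u -> is_ultrafilter v -> is_ultrafilter w ->
     treq u v -> treq v w -> treq u w) /\
  (* [u] |-> supp(u) is onto s(X) (with the equivalences above: an order isomorphism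
     of betaX/equiv onto s(X)) *)
  (forall s : usupport, in_sX s ->
     exists u : (X -> Prop) -> Prop, is_ultrafilter u /\ is_supp u s).
Proof.
split.
  move=> u Hu; have [s hs] := supp_exists Hu.
  by exists s; split => //; exact: (supp_in_sX Hu hs).
split.
  by move=> u v su sv Hu Hv hsu hsv; split; [apply: trle_supp|apply: treq_supp].
do 3 (split; first by [apply: trle_refl|apply: trle_trans|apply: trle_total]).
split; first by move=> u Hu; split; apply: trle_refl.
split; first by move=> u v _ _ [].
split; last exact: supp_surj.
move=> u v w Hu Hv Hw [uv vu] [vw wv].
by split; [apply: trle_trans uv vw|apply: trle_trans wv vu].
Qed.
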